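(* Assume: (A1) $f(x,y)$ and each component of $g(x,y)$ are convex in $y$ for each fixed $x$, and $f,g$ are twice continuously differentiable; (A2) $Y\subseteq\mathbb{R}^m$ is a compact convex set with $\{y:\exists x\in X \text{ such that } g(x,y)\le 0\}\subseteq\mathrm{int}(Y)$; (R1) for each $x\in X$ there exists $y$ with $g(x,y)<0$. Then for each fixed $(\lambda,x)$, the function $\mu\mapsto -h_\mu(\lambda,x)$ is decreasing on $\mu\ge0$, and the functions $-h_\mu$ epi-converge to $-h$ as $\mu\to0$ (with $\mu>0$).
   Context: Let $f:\mathbb{R}^n\times\mathbb{R}^m\to\mathbb{R}$, $g:\mathbb{R}^n\times\mathbb{R}^m\to\mathbb{R}^p$, $G:\mathbb{R}^n\to\mathbb{R}^q$; vector inequalities componentwise; $X=\{x:G(x)\le0\}$. $h(\lambda,x)=\min_y\{f(x,y)+\lambda^{\mathsf T}g(x,y):y\in Y\}$ and, for $\mu\ge0$, $h_\mu(\lambda,x)=\min_y\{\mu\|y\|^2+f(x,y)+\lambda^{\mathsf T}g(x,y):y\in Y\}$ (so $h_0=h$), with $Y$ from (A2). Functions $\phi_\mu$ epi-converge to $\phi$ as $\mu\to0$ if their epigraphs converge to the epigraph of $\phi$ in the Painlevé–Kuratowski sense; equivalently, for every $z$, $\liminf\phi_\mu(z^\mu)\ge\phi(z)$ for all $z^\mu\to z$, and $\limsup\phi_\mu(z^\mu)\le\phi(z)$ for some $z^\mu\to z$. *)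

From HB Require Import structures.
From mathcomp Require Import all_boot all_order all_algebra.
From mathcomp Require Import all_classical all_reals all_analysis.
Set Implicit Arguments. Unset Strict Implicit. Unset Printing Implicit Defensive.
Import Order.TTheory GRing.Theory Num.Theory.
Import numFieldNormedType.Exports.
Local Open Scope classical_set_scope.
Local Open Scope ring_scope.

Section Defs.
Variable R : realType.

Definition sqnorm (m : nat) (y : 'rV[R]_m) : R := \sum_(i < m) (y 0 i) ^+ 2.

Definition dotp (p : nat) (u v : 'rV[R]_p) : R := \sum_(i < p) u 0 i * v 0 i.

Definition vle0 (p : nat) (v : 'rV[R]_p) : Prop := forall i : 'I_p, v 0 i <= 0.
Definition vlt0 (p : nat) (v : 'rV[R]_p) : Prop := forall i : 'I_p, v 0 i < 0.

Definition convex_fun (m : nat) (F : 'rV[R]_m -> R) : Prop :=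
  forall (y1 y2 : 'rV[R]_m) (t : R), 0 <= t -> t <= 1 ->
    F ((1 - t) *: y1 + t *: y2) <= (1 - t) * F y1 + t * F y2.

Definition convex_set_ (m : nat) (Y : set 'rV[R]_m) : Prop :=
  forall (y1 y2 : 'rV[R]_m) (t : R), Y y1 -> Y y2 -> 0 <= t -> t <= 1 ->
    Y ((1 - t) *: y1 + t *: y2).

(* twice continuously differentiable on the whole normed space V:
   f differentiable everywhere, each directional derivative 'D_v f
   differentiable everywhere, and every second directional derivative
   'D_w ('D_v f) continuous.  (Equivalent to f being C^2.) *)
Definition C2 (V : normedModType R) (F : V -> R) : Prop :=
  [/\ forall z, differentiable F z,
      forall (v : V) z, differentiable (fun u => 'D_v F u) z &
      forall v w : V, continuous (fun u => 'D_w (fun u' => 'D_v F u') u)].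

Definition Xset (n q : nat) (G : 'rV[R]_n -> 'rV[R]_q) : set 'rV[R]_n :=
  [set x | vle0 (G x)].

(* h_mu(lambda,x) = min_{y in Y} mu ||y||^2 + f(x,y) + lambda^T g(x,y);
   the minimum (attained, Y compact, integrand continuous) is written as
   the infimum of the set of values. *)
Definition hmu (n m p : nat) (f : 'rV[R]_n -> 'rV[R]_m -> R)
  (g : 'rV[R]_n -> 'rV[R]_m -> 'rV[R]_p) (Y : set 'rV[R]_m)
  (mu : R) (lx : 'rV[R]_p * 'rV[R]_n) : R :=
  inf [set mu * sqnorm y + f lx.2 y + dotp lx.1 (g lx.2 y) | y in Y].

Definition h (n m p : nat) (f : 'rV[R]_n -> 'rV[R]_m -> R)
  (g : 'rV[R]_n -> 'rV[R]_m -> 'rV[R]_p) (Y : set 'rV[R]_m)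
  (lx : 'rV[R]_p * 'rV[R]_n) : R :=
  inf [set f lx.2 y + dotp lx.1 (g lx.2 y) | y in Y].

(* epi-convergence of phi_mu to phi as mu -> 0 (mu > 0), via the sequential
   characterization: liminf phi_mu(z_mu) >= phi(z) for all z_mu -> z, and
   limsup phi_mu(z_mu) <= phi(z) for some z_mu -> z.  Since all functions are
   real valued, liminf/limsup bounds are written with epsilons. *)
Definition epi_converges_at0 (T : topologicalType) (phi : R -> T -> R)
  (phi0 : T -> R) : Prop :=
  forall z : T,
    (forall zmu : R -> T, zmu mu @[mu --> 0^'+] --> z ->
       forall e : R, 0 < e -> \forall mu \near 0^'+, phi0 z - e <= phi mu (zmu mu))
 /\ (exists zmu : R -> T, zmu mu @[mu --> 0^'+] --> z /\
       forall e : R, 0 < e -> \forall mu \near 0^'+, phi mu (zmu mu) <= phi0 z + e).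

End Defs.

From HB Require Import structures.
From mathcomp Require Import all_boot all_order all_algebra.
From mathcomp Require Import all_classical all_reals all_analysis.
From mathcomp Require Import lra.
Import Order.TTheory GRing.Theory Num.Theory.
Import numFieldNormedType.Exports.
Local Open Scope classical_set_scope.
Local Open Scope ring_scope.

(* Write h_mu(l, x) as the infimum over the compact set Y of the penalized
   Lagrangian L((mu, l, x), y) = mu |y|^2 + f(x, y) + l^T g(x, y), which is
   jointly continuous and nondecreasing in mu.  Monotonicity of mu |-> h_mu
   gives the first claim and shows that the constant sequence z_mu = z is a
   recovery sequence, since h_mu(z) >= h_0(z) = h(z).  An infimum over a compact
   set of a jointly continuous family is upper semicontinuous in the parameter,
   so along (mu, z_mu) -> (0, z) we get limsup h_mu(z_mu) <= h(z), which is the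
   liminf half of the epi-convergence of -h_mu. *)

Section InfImage.
Context {R : realType} {T : Type} (Y : set T).

Lemma le_inf_image (F G : T -> R) : has_lbound (F @` Y) ->
  (forall y, Y y -> F y <= G y) -> inf (F @` Y) <= inf (G @` Y).
Proof.
move=> Flb FG; have [->|/set0P[y0 Yy0]] := eqVneq Y set0.
  by rewrite !image_set0 lexx.
apply: lb_le_inf; first by exists (G y0), y0.
by move=> _ [y Yy <-]; apply: le_trans (FG y Yy); apply: ge_inf => //; exists y.
Qed.

End InfImage.

Lemma compact_image_has_lbound {R : realType} {T : topologicalType}
    (F : T -> R) (Y : set T) :
  compact Y -> {within Y, continuous F} -> has_lbound (F @` Y).
Proof.
move=> Ycpt Fcont.
have [M [_ /(_ (`|M| + 1))]] := compact_bounded (continuous_compact Fcont Ycpt).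
rewrite (le_lt_trans (ler_norm _)) ?ltrDl// => /(_ erefl) FM.
exists (- (`|M| + 1)) => _ [y Yy <-].
by have := FM (F y) (ex_intro2 _ _ y Yy erefl); rewrite /= ler_norml => /andP[].
Qed.

Section InfOverCompact.
Context {R : realType} {U T : topologicalType} {F : U -> T -> R} {Y : set T}.
Hypotheses (Ycpt : compact Y) (Fcont : continuous (fun w : U * T => F w.1 w.2)).

Lemma continuous_partial2 u : continuous (F u).
Proof.
move=> y; apply: (continuous_comp (f := fun y => (u, y))) (Fcont (u, y)).
exact: cvg_pair (cvg_cst _) cvg_id.
Qed.

Lemma continuous_partial1 y : continuous (F^~ y).
Proof.
move=> u; apply: (continuous_comp (f := fun u => (u, y))) (Fcont (u, y)).
exact: cvg_pair cvg_id (cvg_cst _).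
Qed.

Lemma param_image_has_lbound u : has_lbound (F u @` Y).
Proof.
apply: compact_image_has_lbound Ycpt _.
exact: continuous_subspaceT (continuous_partial2 u).
Qed.

Lemma inf_image_usc u0 e : 0 < e ->
  \forall u \near u0, inf (F u @` Y) < inf (F u0 @` Y) + e.
Proof.
move=> e_gt0; have [->|/set0P Yn0] := eqVneq Y set0.
  by apply: nearW => u; rewrite !image_set0 ltrDl.
have e2_gt0 : 0 < e / 2 by rewrite divr_gt0.
have [_ [y0 Yy0 <-] Fy0] : exists2 v, (F u0 @` Y) v & v < inf (F u0 @` Y) + e / 2.
  apply: inf_adherent e2_gt0 _; split; last exact: param_image_has_lbound.
  by case: Yn0 => y Yy; exists (F u0 y), y.
near=> u.
have : F u y0 < F u0 y0 + e / 2.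
  by near: u; apply: cvgr_lt (continuous_partial1 y0 u0) _ _; rewrite ltrDl.
have : inf (F u @` Y) <= F u y0.
  by apply: ge_inf; [exact: param_image_has_lbound | exists y0].
lra.
Unshelve. all: by end_near.
Qed.

End InfOverCompact.

Lemma sqnorm_continuous (R : realType) (m : nat) : continuous (@sqnorm R m).
Proof.
move=> y; apply: (@cvg_big _ _ _ _ _ add_continuous _ (nbhs y)) => i _.
exact: continuous_comp (@coord_continuous R 1 m 0 i y) (@exprn_continuous R 2 _).
Qed.

Lemma sqnorm_ge0 (R : realType) (m : nat) (y : 'rV[R]_m) : 0 <= sqnorm y.
Proof. by apply: sumr_ge0 => i _; exact: sqr_ge0. Qed.

Lemma C2_continuous {R : realType} {V : normedModType R} {F : V -> R} :
  C2 F -> continuous F.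
Proof. by case=> F_diff _ _ z; apply: differentiable_continuous. Qed.

Section PenalizedLagrangian.
Context {R : realType} {n m p : nat}.
Variables (f : 'rV[R]_n -> 'rV[R]_m -> R) (g : 'rV[R]_n -> 'rV[R]_m -> 'rV[R]_p).

Definition penalized_lagrangian (w : R * ('rV[R]_p * 'rV[R]_n)) (y : 'rV[R]_m) : R :=
  w.1 * sqnorm y + f w.2.2 y + dotp w.2.1 (g w.2.2 y).

Lemma hmuE Y mu lx : hmu f g Y mu lx = inf (penalized_lagrangian (mu, lx) @` Y).
Proof. by []. Qed.

Lemma hmu0 Y lx : hmu f g Y 0 lx = h f g Y lx.
Proof. by congr inf; apply: eq_imagel => y _; rewrite mul0r add0r. Qed.

Lemma penalized_lagrangian_continuous :
  continuous (fun z : 'rV[R]_n * 'rV[R]_m => f z.1 z.2) ->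
  (forall i, continuous (fun z : 'rV[R]_n * 'rV[R]_m => g z.1 z.2 0 i)) ->
  continuous (fun w : (R * ('rV[R]_p * 'rV[R]_n)) * 'rV[R]_m =>
    penalized_lagrangian w.1 w.2).
Proof.
move=> f_cont g_cont w.
have c_1 : fst @ w --> w.1 by exact: cvg_fst.
have c_mu : (fst \o fst) @ w --> w.1.1 by apply: cvg_comp c_1 _; exact: cvg_fst.
have c_12 : (snd \o fst) @ w --> w.1.2 by apply: cvg_comp c_1 _; exact: cvg_snd.
have c_l : (fst \o (snd \o fst)) @ w --> w.1.2.1 by apply: cvg_comp c_12 _; exact: cvg_fst.
have c_x : (snd \o (snd \o fst)) @ w --> w.1.2.2 by apply: cvg_comp c_12 _; exact: cvg_snd.
have c_y : snd @ w --> w.2 by exact: cvg_snd.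
have c_xy : (fun w : (R * ('rV[R]_p * 'rV[R]_n)) * 'rV[R]_m => (w.1.2.2, w.2)) @ w
    --> (w.1.2.2, w.2) by exact: cvg_pair c_x c_y.
rewrite /penalized_lagrangian; apply: cvgD; first apply: cvgD.
- by apply: cvgM; [exact: c_mu | apply: continuous_comp c_y _; exact: sqnorm_continuous].
- exact: (continuous_comp c_xy (f_cont (w.1.2.2, w.2))).
- apply: cvg_big => [|i _]; first exact: add_continuous.
  apply: cvgM; first exact: (continuous_comp c_l (@coord_continuous R 1 p 0 i _)).
  exact: (continuous_comp c_xy (g_cont i (w.1.2.2, w.2))).
Qed.

End PenalizedLagrangian.

Theorem proposition2 (R : realType) (n m p q : nat)
  (f : 'rV[R]_n -> 'rV[R]_m -> R) (g : 'rV[R]_n -> 'rV[R]_m -> 'rV[R]_p)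
  (G : 'rV[R]_n -> 'rV[R]_q) (Y : set 'rV[R]_m)
  (* (A1) *)
  (Hfconv : forall x, convex_fun (f x))
  (Hgconv : forall x (i : 'I_p), convex_fun (fun y => g x y 0 i))
  (HfC2 : C2 (fun z : 'rV[R]_n * 'rV[R]_m => f z.1 z.2))
  (HgC2 : forall i : 'I_p, C2 (fun z : 'rV[R]_n * 'rV[R]_m => g z.1 z.2 0 i))
  (* (A2) *)
  (HYcpt : compact Y) (HYconv : convex_set_ Y)
  (HYint : [set y | exists2 x, Xset G x & vle0 (g x y)] `<=` interior Y)
  (* (R1) *)
  (HR1 : forall x, Xset G x -> exists y, vlt0 (g x y)) :
  (forall (lx : 'rV[R]_p * 'rV[R]_n) (mu1 mu2 : R), 0 <= mu1 -> mu1 <= mu2 ->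
      - hmu f g Y mu2 lx <= - hmu f g Y mu1 lx)
  /\ epi_converges_at0 (fun mu lx => - hmu f g Y mu lx) (fun lx => - h f g Y lx).
Proof.
have L_cont := penalized_lagrangian_continuous f g (C2_continuous HfC2)
  (fun i => C2_continuous (HgC2 i)).
have hmu_mono lx mu1 mu2 : mu1 <= mu2 -> hmu f g Y mu1 lx <= hmu f g Y mu2 lx.
  move=> mu12; rewrite !hmuE; apply: le_inf_image.
    exact: param_image_has_lbound HYcpt L_cont _.
  by move=> y _; rewrite /penalized_lagrangian /= !lerD2r ler_wpM2r ?sqnorm_ge0.
split=> [lx mu1 mu2 _ mu12|z]; first by rewrite lerN2 hmu_mono.
split=> [zmu zmu_z e e_gt0|].
  have mu_cvg : mu @[mu --> 0^'+] --> (0 : R) by exact: cvg_at_right_filter cvg_id.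
  have w_cvg : (mu, zmu mu) @[mu --> 0^'+] --> (0, z) by exact: cvg_pair mu_cvg zmu_z.
  have usc := inf_image_usc HYcpt L_cont (0, z) e e_gt0.
  near=> mu.
  have : hmu f g Y mu (zmu mu) < hmu f g Y 0 z + e by near: mu; exact: w_cvg usc.
  rewrite hmu0; lra.
exists (fun=> z); split=> [|e e_gt0]; first exact: cvg_cst.
near=> mu.
have : hmu f g Y 0 z <= hmu f g Y mu z.
  by apply/hmu_mono/ltW; near: mu; exact: nbhs_right_gt.
rewrite hmu0; lra.
Unshelve. all: by end_near.
Qed.
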